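(* Every finite Frobenius group and every finite extra-special group is a generalized B-group.
   Context: For a finite group $G$ with identity $e$ and $X\subseteq G$, write $\underline{X}=\sum_{x\in X}x\in\mathbb{Z}G$. A subring $\mathcal{A}$ of $\mathbb{Z}G$ is an S-ring over $G$ if there is a partition $\mathcal{S}(\mathcal{A})$ of $G$ (basic sets) such that $\{e\}\in\mathcal{S}(\mathcal{A})$, $X\in\mathcal{S}(\mathcal{A})\Rightarrow X^{-1}\in\mathcal{S}(\mathcal{A})$, and $\mathcal{A}$ is the $\mathbb{Z}$-span of $\{\underline{X}: X\in\mathcal{S}(\mathcal{A})\}$. An $\mathcal{A}$-subgroup is a subgroup of $G$ that is a union of basic sets; $\mathcal{A}$ is primitive if its only $\mathcal{A}$-subgroups are $\{e\}$ and $G$. $\mathcal{A}$ is central if $\mathcal{A}\subseteq\mathcal{Z}(\mathbb{Z}G)$. The trivial S-ring is $\mathbb{Z}e+\mathbb{Z}\underline{G}$. A central S-ring over $G$ is proper if it is different from both $\mathcal{Z}(\mathbb{Z}G)$ and the trivial S-ring. A finite group $G$ is a generalized B-group if no proper central S-ring over $G$ is primitive. *)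

From HB Require Import structures.
From mathcomp Require Import all_boot all_order all_fingroup all_solvable.
Set Implicit Arguments. Unset Strict Implicit. Unset Printing Implicit Defensive.

Local Open Scope group_scope.

(* An S-ring over G is determined by its partition P of G into basic sets.
   The Z-span of {sum X : X in P} is a subring of ZG iff it contains e
   ([set 1] \in P) and is closed under products, i.e. for all basic sets
   X, Y the coefficient of z in (sum X)(sum Y), namely
   #{(x,y) in X*Y | x*y = z}, is constant as z ranges over each basic set Z. *)
Definition struct_const (gT : finGroupType) (X Y : {set gT}) (z : gT) : nat :=
  #|[set xy : gT * gT | (xy.1 \in X) && (xy.2 \in Y) && (xy.1 * xy.2 == z)]|.

Definition is_Sring (gT : finGroupType) (G : {group gT}) (P : {set {set gT}}) : Prop :=
  [/\ partition P G,
      [set 1] \in P,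
      (forall X, X \in P -> X^-1 \in P) &
      (forall X Y Z, X \in P -> Y \in P -> Z \in P ->
         forall z z', z \in Z -> z' \in Z ->
           struct_const X Y z = struct_const X Y z')].

(* Central: every basic quantity sum X lies in Z(ZG), i.e. every basic set is
   invariant under conjugation by G. *)
Definition Sring_central (gT : finGroupType) (G : {group gT}) (P : {set {set gT}}) : Prop :=
  forall X, X \in P -> forall g, g \in G -> X :^ g = X.

Definition Sring_subgroup (gT : finGroupType) (G : {group gT}) (P : {set {set gT}})
    (H : {group gT}) : Prop :=
  H \subset G /\ (forall X, X \in P -> X \subset H \/ [disjoint X & H]).

Definition Sring_primitive (gT : finGroupType) (G : {group gT}) (P : {set {set gT}}) : Prop :=
  forall H : {group gT}, Sring_subgroup G P H -> H :=: 1 \/ H :=: G.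

(* Basic sets of the trivial S-ring Ze + Z(sum G): {e} and G \ {e}
   (the latter only when nonempty). *)
Definition trivial_partition (gT : finGroupType) (G : {group gT}) : {set {set gT}} :=
  [set X in [set [set 1]; G^#] | X != set0].

(* Basic sets of Z(ZG) are the conjugacy classes. *)
Definition generalized_B_group (gT : finGroupType) (G : {group gT}) : Prop :=
  forall P : {set {set gT}},
    is_Sring G P -> Sring_central G P ->
    P != classes G -> P != trivial_partition G ->
    ~ Sring_primitive G P.

From mathcomp Require Import all_boot all_order all_fingroup all_solvable.
From mathcomp Require Import vcharacter zify.
Set Implicit Arguments. Unset Strict Implicit. Unset Printing Implicit Defensive.
Local Open Scope group_scope.

(* Frobenius groups (with [N] the kernel) and extraspecial groups (with [N] the
   center) have a proper nontrivial normal subgroup [N] such that [x N] lies in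
   the conjugacy class of [x] for every [x] outside [N]. Basic sets of a central
   S-ring are unions of classes, so a basic set through such an [x] contains [x N]
   and [N x]. If the S-ring is primitive, every basic set meets [N], for otherwise
   its stabiliser would be a proper S-ring subgroup containing [N]. Comparing
   structure constants of [X X^-1] at a point of [N] and at a point outside [N]
   then shows that a basic set [X] meeting [G :\: N] contains at least half of
   [N]; as [1] lies in no such [X], there is only one of them, [W]. Finally
   [N :\: W] is an S-ring subgroup, hence trivial, so [W = G^#]. *)

Lemma eqn_card_sep (T : finType) (A : {set T}) (p : pred T) :
  (#|[set x in A | p x]| == #|A|) = [forall x in A, p x].
Proof.
have sAp_A : [set x in A | p x] \subset A by apply/subsetP=> x /setIdP[].
rewrite (subset_leqif_card sAp_A).2; apply/subsetP/forall_inP=> sA x xA.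
  by case/setIdP: (sA x xA).
by rewrite inE xA sA.
Qed.

Lemma struct_constE (gT : finGroupType) (X Y : {set gT}) z :
  struct_const X Y z = #|[set x in X | x^-1 * z \in Y]|.
Proof.
rewrite /struct_const.
have -> : [set xy : gT * gT | (xy.1 \in X) && (xy.2 \in Y) && (xy.1 * xy.2 == z)]
   = (fun x => (x, x^-1 * z)) @: [set x in X | x^-1 * z \in Y].
  apply/setP=> [[a b]]; rewrite !inE /=; apply/idP/imsetP.
    case/andP=> /andP[aX bY] /eqP <-.
    by exists a; rewrite ?inE ?aX mulKg.
  by case=> x /setIdP[xX xzY] [-> ->]; rewrite xX xzY mulKVg eqxx.
by rewrite card_imset // => x y [].
Qed.

Lemma struct_const_invr (gT : finGroupType) (X : {set gT}) g :
  struct_const X X^-1 g = #|[set x in X | g^-1 * x \in X]|.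
Proof.
by rewrite struct_constE; apply: eq_card => x; rewrite !inE invMg invgK.
Qed.

Section SringBasics.

Variables (gT : finGroupType) (G : {group gT}) (P : {set {set gT}}).
Hypothesis sringP : is_Sring G P.

Let partP : partition P G. Proof. by case: sringP. Qed.

Lemma basic_sub X : X \in P -> X \subset G.
Proof. by have [/eqP <- _ _] := and3P partP; apply: bigcup_sup. Qed.

Lemma basic_neq0 X : X \in P -> X != set0.
Proof. by have [_ _ P0] := and3P partP => XP; apply: contraNneq P0 => <-. Qed.

Lemma basic_eq X Y g : X \in P -> Y \in P -> g \in X -> g \in Y -> X = Y.
Proof.
have [_ tiP _] := and3P partP => XP YP gX gY.
by rewrite -(def_pblock tiP XP gX) (def_pblock tiP YP gY).
Qed.

Lemma basic_disjoint X Y : X \in P -> Y \in P -> X != Y -> [disjoint X & Y].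
Proof. by have [_ tiP _] := and3P partP; apply: (trivIsetP tiP). Qed.

Lemma pblock_basic g : g \in G -> pblock P g \in P.
Proof. by have [/eqP covP _ _] := and3P partP => gG; rewrite pblock_mem ?covP. Qed.

Lemma mem_pblock_basic g : g \in G -> g \in pblock P g.
Proof. by have [/eqP covP _ _] := and3P partP => gG; rewrite mem_pblock covP. Qed.

Lemma basic1 X : X \in P -> 1 \in X -> X = [set 1].
Proof. by case: sringP => _ P1 _ _ XP X1; apply: basic_eq XP P1 X1 (set11 1). Qed.

Definition basic_stab (X : {set gT}) := [set g in G | [forall x in X, g^-1 * x \in X]].

Lemma basic_stab_group_set X : group_set (basic_stab X).
Proof.
apply/group_setP; split.
  by rewrite inE group1; apply/forall_inP=> x xX; rewrite invg1 mul1g.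
move=> a b /setIdP[aG /forall_inP aX] /setIdP[bG /forall_inP bX].
by rewrite inE groupM //; apply/forall_inP=> x xX; rewrite invMg -mulgA bX ?aX.
Qed.

Canonical basic_stab_group X := Group (basic_stab_group_set X).

Lemma basic_stab_struct_const X g :
  g \in G -> (g \in basic_stab X) = (struct_const X X^-1 g == #|X|).
Proof. by move=> gG; rewrite struct_const_invr eqn_card_sep inE gG. Qed.

Lemma basic_stab_Sring_subgroup X :
  X \in P -> Sring_subgroup G P (basic_stab_group X).
Proof.
case: sringP => _ _ Pinv Pc XP; split=> [|Z ZP].
  by apply/subsetP=> g /setIdP[].
have [z /andP[zZ zR] | dZ] := pickP [pred z in Z | z \in basic_stab X]; last first.
  by right; apply/pred0P=> z; apply: dZ.
left; apply/subsetP=> z' z'Z; have sZG := subsetP (basic_sub ZP).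
by rewrite /= basic_stab_struct_const ?sZG // -(Pc _ _ _ XP (Pinv X XP) ZP _ _ zZ z'Z)
  -basic_stab_struct_const ?sZG.
Qed.

End SringBasics.

(* Only the coset condition of a Camina pair; that [N] is a proper nontrivial
   normal subgroup is assumed separately. *)
Definition camina_pair (gT : finGroupType) (G N : {set gT}) :=
  forall x m, x \in G -> x \notin N -> m \in N -> x * m \in x ^: G.

Section CaminaSring.

Variables (gT : finGroupType) (G N : {group gT}) (P : {set {set gT}}).
Hypotheses (sringP : is_Sring G P) (centP : Sring_central G P).
Hypotheses (nsNG : N <| G) (camNG : camina_pair G N).

Let sNG := normal_sub nsNG.

Lemma basic_mul_normalr X x m :
  X \in P -> x \in X -> x \notin N -> m \in N -> x * m \in X.
Proof.
move=> XP xX xN mN; have xG := subsetP (basic_sub sringP XP) x xX.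
have /imsetP[g gG ->] := camNG xG xN mN.
by rewrite -(centP XP gG) memJ_conjg.
Qed.

Lemma basic_mul_normall X x m :
  X \in P -> x \in X -> x \notin N -> m \in N -> m * x \in X.
Proof.
move=> XP xX xN mN; have -> : m * x = x * m ^ x by rewrite conjgE !mulgA mulgV mul1g.
apply: basic_mul_normalr => //; rewrite memJ_norm //.
by rewrite (subsetP (normal_norm nsNG)) ?(subsetP (basic_sub sringP XP)).
Qed.

Lemma basic_outside_normal_not1 X x :
  X \in P -> x \in X -> x \notin N -> 1 \notin X.
Proof.
move=> XP xX xN; apply: contra xN => X1.
by move: xX; rewrite (basic1 sringP XP X1) inE => /eqP ->.
Qed.

Hypotheses (primP : Sring_primitive G P) (ntN : N :!=: 1).

(* Otherwise the stabiliser of [X] would be an S-ring subgroup containing [N],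
   hence all of [G], making [X] contain [1]. *)
Lemma basic_meet_normal X : X \in P -> exists2 n, n \in N & n \in X.
Proof.
move=> XP; have [n /andP[nN nX] | dXN] := pickP [pred n in N | n \in X].
  by exists n.
have XN' x : x \in X -> x \notin N.
  by move=> xX; apply/negP=> xN; have := dXN x; rewrite /= xN xX.
have [stab1 | stabG] := primP (basic_stab_Sring_subgroup sringP XP).
  case/eqP: ntN; apply/trivgP; rewrite -stab1; apply/subsetP=> n nN.
  rewrite inE (subsetP sNG) //; apply/forall_inP=> x xX.
  by apply: basic_mul_normall; rewrite ?XN' ?groupV.
have /set0Pn[x xX] := basic_neq0 sringP XP.
have : x \in basic_stab G X by rewrite [_ X]stabG (subsetP (basic_sub sringP XP)).
case/setIdP=> _ /forall_inP/(_ x xX); rewrite mulVg => X1.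
by case/negP: (XN' 1 X1).
Qed.

(* Compare [struct_const X X^-1] at some [n] in [N] and at [y], both lying in
   the basic set of [y]: at [n] it is at least [#|X :\: N|], since [X :\: N]
   is a union of [N]-cosets; at [y] it is at most [#|X :&: N| + #|X| - #|N|],
   since [y *: N] is contained in [X]. *)
Lemma card_normal_le_double_basic X y :
  X \in P -> y \in X -> y \notin N -> #|N| <= (#|X :&: N|).*2.
Proof.
move=> XP yX yN; have yG := subsetP (basic_sub sringP XP) y yX.
have [n nN nY] := basic_meet_normal (pblock_basic sringP yG).
case: sringP => _ _ Pinv Pc.
have := Pc _ _ _ XP (Pinv X XP) (pblock_basic sringP yG) _ _ nY
  (mem_pblock_basic sringP yG); rewrite !struct_const_invr.
set S := [set x in X | y^-1 * x \in X] => eqS.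
have le_XN'_S : #|X :\: N| <= #|S|.
  rewrite -eqS; apply: subset_leq_card; apply/subsetP=> x /setDP[xX xN].
  by rewrite inE xX basic_mul_normall ?groupV.
have sYN_X : y *: N \subset X.
  by apply/subsetP=> _ /lcosetP[m mN ->]; apply: basic_mul_normalr.
have le_SyN : #|S :&: (y *: N)| <= #|X :&: N|.
  rewrite -(card_lcoset _ y^-1); apply: subset_leq_card; apply/subsetP=> z.
  case/lcosetP=> x /setIP[/setIdP[_ yxX] /lcosetP[m mN def_x]] ->.
  by rewrite inE yxX def_x mulKg mN.
have le_SyN' : #|S :\: (y *: N)| <= #|X :\: (y *: N)|.
  by apply/subset_leq_card/setSD/subsetP=> x /setIdP[].
have card_XyN' : #|X :\: (y *: N)| + #|N| = #|X|.
  by rewrite cardsD (setIidPr sYN_X) card_lcoset subnK // -(card_lcoset N y)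
    subset_leq_card.
have cardS := cardsID (y *: N) S; have cardX := cardsID N X.
move: le_XN'_S le_SyN le_SyN' card_XyN' cardS cardX; rewrite -addnn; clear -S.
(* [lia] does not identify convertible copies of these cardinals. *)
move: #|N| #|X| #|S| #|X :&: N| #|X :\: N| #|S :&: _| #|S :\: _| #|X :\: _|.
move=> *; lia.
Qed.

Lemma basic_outside_normal_eq X Y x y : X \in P -> Y \in P ->
  x \in X -> x \notin N -> y \in Y -> y \notin N -> X = Y.
Proof.
move=> XP YP xX xN yY yN; have [// | neXY] := eqVneq X Y; exfalso.
have leXN := card_normal_le_double_basic XP xX xN.
have leYN := card_normal_le_double_basic YP yY yN.
have sXYN_N1 : (X :&: N) :|: (Y :&: N) \subset N :\ 1.
  apply/subsetP=> z; rewrite !inE => /orP[] /andP[zX zN]; rewrite zN andbT;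
    apply: contraTneq zX => ->.
    exact: basic_outside_normal_not1 xX xN.
  exact: basic_outside_normal_not1 yY yN.
have tiXYN : (X :&: N) :&: (Y :&: N) = set0.
  apply/eqP; rewrite -subset0 -(disjoint_setI0 (basic_disjoint sringP XP YP neXY)).
  exact: setISS (subsetIl _ _) (subsetIl _ _).
have := subset_leq_card sXYN_N1; rewrite cardsU tiXYN cards0 subn0.
have := cardsD1 1 N; rewrite group1; move: leXN leYN; rewrite -!addnn /=; clear.
move: #|N| #|N :\ 1| #|X :&: N| #|Y :&: N| => *; lia.
Qed.

Section OutsideBasic.

Variables (W : {set gT}) (w : gT).
Hypotheses (WP : W \in P) (wW : w \in W) (wN : w \notin N).

Lemma outside_normal_sub_basic : G :\: N \subset W.
Proof.
apply/subsetP=> g /setDP[gG gN].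
have gP := pblock_basic sringP gG; have gPg := mem_pblock_basic sringP gG.
by rewrite -(basic_outside_normal_eq gP WP gPg gN wW wN).
Qed.

(* The basic set [Y] of [y] lies in [N], so [u^-1 * w] lies outside [N], hence in
   [W], for all [u] in [Y]: [struct_const Y W] is [#|Y|] at [w], hence at [n]. *)
Lemma basic_outside_mulVg y n : y \in N :\: W -> n \in W :&: N -> y^-1 * n \in W.
Proof.
case/setDP=> yN yW /setIP[nW nN]; have yG := subsetP sNG y yN.
set Y := pblock P y; have YP : Y \in P := pblock_basic sringP yG.
have sYN : Y \subset N.
  apply/subsetP=> u uY; apply: contraR yW => uN.
  by rewrite -(basic_outside_normal_eq YP WP uY uN wW wN) (mem_pblock_basic sringP yG).
case: sringP => _ _ _ Pc; have := Pc _ _ _ YP WP WP _ _ wW nW.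
rewrite !struct_constE => /eqP; apply: contraTT => nyW.
have /eqP -> : #|[set u in Y | u^-1 * w \in W]| == #|Y|.
  rewrite eqn_card_sep; apply/forall_inP=> u uY; have uN := subsetP sYN u uY.
  have wG := subsetP (basic_sub sringP WP) w wW.
  apply: (subsetP outside_normal_sub_basic).
  rewrite inE (groupM (groupVr (subsetP sNG u uN)) wG) andbT.
  by apply: contra wN => uwN; rewrite -(mulKVg u w) groupM.
rewrite eq_sym eqn_card_sep; apply: contra nyW => /forall_inP; apply.
exact: (mem_pblock_basic sringP yG).
Qed.

Lemma normal_diff_basic_group_set : group_set (N :\: W).
Proof.
have mulVg_in y y' : y \in N :\: W -> y' \in N :\: W -> y^-1 * y' \in N :\: W.
  move=> yL /setDP[y'N y'W]; have /setDP[yN _] := yL.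
  rewrite inE groupM ?groupV // andbT; apply: contra y'W => yy'W.
  have sWN : y^-1 *: (W :&: N) \subset W :&: N.
    apply/subsetP=> _ /lcosetP[n nWN ->]; have /setIP[_ nN] := nWN.
    by rewrite inE basic_outside_mulVg // groupM ?groupV.
  have eqWN : y^-1 *: (W :&: N) = W :&: N.
    by apply/eqP; rewrite eqEcard sWN card_lcoset leqnn.
  have : y^-1 * y' \in y^-1 *: (W :&: N) by rewrite eqWN inE yy'W groupM ?groupV.
  by rewrite mem_lcoset invgK mulKVg => /setIP[].
have L1 : 1 \in N :\: W by rewrite inE (basic_outside_normal_not1 WP wW wN) group1.
apply/group_setP; split=> // a b aL bL.
by rewrite -(invgK a) mulVg_in // -(mulg1 a^-1) mulVg_in.
Qed.

End OutsideBasic.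

Hypothesis prNG : N \proper G.

Lemma primitive_Sring_trivial : P = trivial_partition G.
Proof.
have [_ [w wG wN]] := properP prNG.
set W := pblock P w; have WP : W \in P := pblock_basic sringP wG.
have wW : w \in W := mem_pblock_basic sringP wG.
pose L := Group (normal_diff_basic_group_set WP wW wN).
have sXL X : X \in P -> X != W -> X \subset L.
  move=> XP neXW; apply/subsetP=> x xX; rewrite inE; apply/andP; split.
    by apply: contra neXW => xW; rewrite (basic_eq sringP XP WP xX xW).
  by apply: contraR neXW => xN; rewrite (basic_outside_normal_eq XP WP xX xN wW wN).
have LP : Sring_subgroup G P L.
  split=> [|X XP]; first exact: subset_trans (subsetDl N W) sNG.
  have [-> | /(sXL X XP) //] := eqVneq X W; last by left.
  by right; rewrite disjoint_sym disjoints_subset /= setDE subsetIr.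
have [L1 | LG] := primP LP; last first.
  by move: wG; rewrite -LG => /setDP[]; rewrite (negPf wN).
have WG : W = G^#.
  apply/setP=> g; rewrite !inE; apply/idP/andP=> [gW | [g1 gG]].
    split; last exact: subsetP (basic_sub sringP WP) g gW.
    by apply: contraTneq gW => ->; exact: (basic_outside_normal_not1 WP wW wN).
  have [gN | gN] := boolP (g \in N); last first.
    by apply: (subsetP (outside_normal_sub_basic WP wW wN)); rewrite inE gN.
  apply: contraR g1 => gW; have : g \in L by rewrite inE gW gN.
  by rewrite L1 inE.
apply/setP=> X; rewrite !inE; apply/idP/idP=> [XP | ].
  rewrite (basic_neq0 sringP XP) andbT.
  have [-> | neXW] := eqVneq X W; first by rewrite WG eqxx orbT.
  have /set0Pn[x xX] := basic_neq0 sringP XP.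
  have : x \in L := subsetP (sXL X XP neXW) x xX.
  by rewrite L1 => /set1P x1; rewrite (basic1 sringP XP) -?x1 ?eqxx.
by case/andP=> /orP[]/eqP -> _; [case: sringP | rewrite -WG].
Qed.

End CaminaSring.

Lemma camina_generalized_B_group (gT : finGroupType) (G N : {group gT}) :
  N <| G -> N :!=: 1 -> N \proper G -> camina_pair G N -> generalized_B_group G.
Proof.
move=> nsNG ntN prNG camNG P sringP centP _ ntrivP primP.
by case/eqP: ntrivP; apply: primitive_Sring_trivial nsNG camNG _ _ _.
Qed.

(* [k |-> [~ x, k]] is injective on [K] because [x] centralises no nontrivial
   element of the kernel, so it maps [K] onto [K]. *)
Lemma Frobenius_camina_pair (gT : finGroupType) (G K H : {group gT}) :
  [Frobenius G = K ><| H] -> camina_pair G K.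
Proof.
move=> frobG x m xG xK mK.
have [defG _ _ _ _] := Frobenius_context frobG.
have [/andP[sKG nKG] _ _ _ _] := sdprod_context defG.
have commK : {in K, forall k, [~ x, k] \in K}.
  by move=> k kK; rewrite commgEr groupM // memJ_norm ?groupV ?(subsetP nKG).
have inj_commK : {in K &, injective (commg x)}.
  move=> k k' kK k'K; rewrite !commgEl => /mulgI eqJ.
  apply/eqP; rewrite eq_mulgV1; apply: contraR xK => nt_kk'.
  have kk'K : k * k'^-1 \in K^# by rewrite !inE nt_kk' groupM ?groupV.
  apply: (subsetP (Frobenius_cent1_ker frobG kk'K)).
  rewrite inE xG; apply/cent1P/commgP/conjg_fixP.
  by rewrite conjgM eqJ -conjgM mulgV conjg1.
have imK : commg x @: K = K.
  apply/eqP; rewrite eqEcard card_in_imset // leqnn andbT.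
  by apply/subsetP=> _ /imsetP[k kK ->]; apply: commK.
have /imsetP[k kK ->] : m \in commg x @: K by rewrite imK.
by rewrite commgEl mulKVg memJ_class ?(subsetP sKG).
Qed.

(* The commutators [[~ x, g]] form a nontrivial subgroup of the center, which
   has prime order. *)
Lemma extraspecial_camina_pair (gT : finGroupType) (G : {group gT}) :
  extraspecial G -> camina_pair G 'Z(G).
Proof.
move=> [[_ defG'] prZ] x m xG xZ mZ.
have commZ g : g \in G -> [~ x, g] \in 'Z(G) by rewrite -defG' => gG; apply: mem_commg.
have fixZ z g : z \in 'Z(G) -> g \in G -> z ^ g = z.
  by case/centerP=> _ cGz gG; apply/conjg_fixP/commgP/cGz.
pose C := [set [~ x, g] | g in G].
have C1 : 1 \in C by apply/imsetP; exists 1; rewrite ?commg1.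
have sCZ : C \subset 'Z(G) by apply/subsetP=> _ /imsetP[g gG ->]; apply: commZ.
have C_group : group_set C.
  apply/group_setP; split=> // _ _ /imsetP[g gG ->] /imsetP[h hG ->].
  by apply/imsetP; exists (h * g); rewrite ?groupM // commgMJ fixZ ?commZ.
have ntC : #|Group C_group| != 1%N.
  apply: contra xZ => /eqP/card1_trivg C1'; apply/centerP; split=> // y yG.
  apply/commgP; have : [~ x, y] \in Group C_group by apply/imsetP; exists y.
  by rewrite C1' inE.
have defC : C = 'Z(G).
  apply/eqP; rewrite eqEcard sCZ.
  by rewrite (prime_nt_dvdP prZ ntC (cardSg (sCZ : Group C_group \subset _))) leqnn.
have /imsetP[g gG ->] : m \in C by rewrite defC.
by rewrite commgEl mulKVg memJ_class.
Qed.

Theorem corollary1p6 (gT : finGroupType) (G : {group gT}) :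
  ([Frobenius G]%g \/ extraspecial G) -> generalized_B_group G.
Proof.
case=> [/existsP[H /Frobenius_kernel_exists[K frobK]] | esG].
  have [defG ntK _ prK _] := Frobenius_context frobK.
  have [nsKG _ _ _ _] := sdprod_context defG.
  exact: camina_generalized_B_group nsKG ntK prK (Frobenius_camina_pair frobK).
apply: camina_generalized_B_group (center_normal G) _ _ (extraspecial_camina_pair esG).
  by rewrite -cardG_gt1 prime_gt1 //; case: esG.
rewrite properEneq center_sub andbT; apply: contra (extraspecial_nonabelian esG).
by move/eqP/center_idP.
Qed.
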